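(* Let $k$ be a natural number, let $(X,\Sigma)$ be a measurable space, and let $\mu,\nu$ be finite measures on $(X,\Sigma)$ with $\mu$ absolutely continuous with respect to $\nu$; let $f\colon X\to[0,\infty)$ be a (measurable) Radon–Nikodym derivative $f=\frac{d\mu}{d\nu}$. Assume that one of the following holds: (I) $G=\mathbb{R}$ and $\nu$ is non-atomic; or (II) $G=\mathbb{Z}$, $X$ is finite, $\Sigma=2^X$, and $\nu$ is the counting measure. Let $q=(q_1,\dots,q_k)\in(G\cap[0,\infty))^k$ satisfy $q_1+\dots+q_k=\nu(X)$. Then there exists a partition $Q=(B_1,\dots,B_k)\in\mathcal{P}_{\nu,q}$ such that for all $i,j\in[k]$ with $i<j$, $$\sup_{B_i}f\le\inf_{B_j}f,$$ with the conventions $\sup\emptyset=-\infty$ and $\inf\emptyset=\infty$.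
   Context: $[k]:=\{1,\dots,k\}$. $\mathcal{P}_k$ denotes the set of all ordered partitions $P=(A_1,\dots,A_k)$ of $X$ with $A_i\in\Sigma$ for all $i$ (i.e. the $A_i$ are pairwise disjoint measurable sets, possibly empty, whose union is $X$). $\mathcal{P}_{\nu,q}:=\{P=(A_1,\dots,A_k)\in\mathcal{P}_k:\ \nu(A_i)=q_i\ \text{for all } i\in[k]\}$. *)

From HB Require Import structures.
From mathcomp Require Import all_boot all_order all_algebra.
From mathcomp Require Import all_classical all_reals all_analysis.
Set Implicit Arguments. Unset Strict Implicit. Unset Printing Implicit Defensive.
Import Order.TTheory GRing.Theory Num.Theory.
Local Open Scope classical_set_scope.
Local Open Scope ring_scope.
Local Open Scope ereal_scope.

Definition nonatomic d (T : measurableType d) (R : realType)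
  (nu : set T -> \bar R) : Prop :=
  forall A, measurable A -> 0 < nu A ->
    exists B, [/\ measurable B, B `<=` A & 0 < nu B < nu A].

Definition is_RN_derivative d (T : measurableType d) (R : realType)
  (mu nu : {measure set T -> \bar R}) (f : T -> R) : Prop :=
  [/\ measurable_fun setT f, (forall x, (0 <= f x)%R) &
      forall A, measurable A -> mu A = \int[nu]_(x in A) (f x)%:E].

Definition in_Pnuq d (T : measurableType d) (R : realType) (k : nat)
  (nu : set T -> \bar R) (q : 'I_k -> R) (A : 'I_k -> set T) : Prop :=
  [/\ (forall i, measurable (A i)),
      (forall i j, i != j -> A i `&` A j = set0),
      \bigcup_i A i = setT &
      (forall i, nu (A i) = (q i)%:E)].

From HB Require Import structures.
From mathcomp Require Import all_boot all_order all_algebra.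
From mathcomp Require Import all_classical all_reals all_analysis.
From mathcomp Require Import measurable_realfun lra.
Set Implicit Arguments.
Unset Strict Implicit.
Unset Printing Implicit Defensive.
Import Order.TTheory GRing.Theory Num.Theory.
Local Open Scope classical_set_scope.
Local Open Scope ring_scope.

(* A subset of A of prescribed measure t lying below the rest of A is cut
   out at a quantile c of f on A, where nu (A & [f < c]) <= t and
   t <= nu (A & [f <= c]): complete A & [f < c] by a subset of the level set
   A & [f = c] of the missing measure.  Such subsets exist by Sierpinski's theorem when nu is
   non-atomic (each value of [0, nu E] is the measure of a subset of E, found
   by a greedy exhaustion), and by adding points one at a time for the counting
   measure and integer values.  Cutting B_1 out of X, then B_2 out of the
   remainder, and so on, gives the partition. *)

Section fine_finite_measure.
Variables (R : realType) (d : measure_display) (T : measurableType d)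
  (nu : {finite_measure set T -> \bar R}).

Local Notation m A := (fine (nu A)).

Lemma measure_fineE A : measurable A -> nu A = (m A)%:E.
Proof. by move=> mA; rewrite fineK // fin_num_measure. Qed.

Lemma fine_measure_ge0 A : 0 <= m A.
Proof. exact/fine_ge0/measure_ge0. Qed.

Lemma fine_measure0 : m set0 = 0.
Proof. by rewrite measure0. Qed.

Lemma fine_measureU A B : measurable A -> measurable B -> A `&` B = set0 ->
  m (A `|` B) = m A + m B.
Proof.
by move=> mA mB AB0; rewrite measureU // fineD // fin_num_measure.
Qed.

Lemma le_fine_measure A B : measurable A -> measurable B -> A `<=` B ->
  m A <= m B.
Proof.
move=> mA mB AB; rewrite -lee_fin -measure_fineE // -measure_fineE //.
by apply: le_measure; rewrite ?inE.
Qed.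

Lemma fine_measureD A B : measurable A -> measurable B -> B `<=` A ->
  m (A `\` B) = m A - m B.
Proof.
move=> mA mB BA; have := fine_measureU mB (measurableD mA mB) (setDIK _ _).
by rewrite setDUK // => ->; rewrite addrC addKr.
Qed.

Lemma fine_measure_bigcup_le (F : nat -> set T) t :
  (forall n, measurable (F n)) -> (forall n k, (n <= k)%N -> F n `<=` F k) ->
  (forall n, m (F n) <= t) -> m (\bigcup_n F n) <= t.
Proof.
move=> mF incF Ft.
have mUF : measurable (\bigcup_n F n) by exact: bigcupT_measurable.
have incF' : {homo F : n k / (n <= k)%N >-> (n <= k)%O}.
  by move=> n k nk; rewrite subsetEset; exact: incF.
have Fcvg := nondecreasing_cvg_mu (mu := nu) mF mUF incF'.
rewrite -lee_fin -measure_fineE // -(cvg_lim _ Fcvg) //.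
apply: lime_le; first exact: cvgP Fcvg.
by apply: nearW => n /=; rewrite measure_fineE // lee_fin.
Qed.

Lemma fine_measure_bigcap_ge (F : nat -> set T) t :
  (forall n, measurable (F n)) -> (forall n k, (n <= k)%N -> F k `<=` F n) ->
  (forall n, t <= m (F n)) -> t <= m (\bigcap_n F n).
Proof.
move=> mF decF Ft.
have mIF : measurable (\bigcap_n F n) by exact: bigcapT_measurable.
have decF' : {homo F : n k / (n <= k)%N >-> (k <= n)%O}.
  by move=> n k nk; rewrite subsetEset; exact: decF.
have F0_finite : (nu (F 0%N) < +oo)%E by rewrite measure_fineE // ltry.
have Fcvg := nonincreasing_cvg_mu (mu := nu) F0_finite mF mIF decF'.
rewrite -lee_fin -measure_fineE // -(cvg_lim _ Fcvg) //.
apply: lime_ge; first exact: cvgP Fcvg.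
by apply: nearW => n /=; rewrite measure_fineE // lee_fin.
Qed.

Definition half_maximal_subset E s C :=
  [/\ measurable C, C `<=` E, m C <= s &
    forall D, measurable D -> D `<=` E -> m D <= s -> m D <= 2 * m C].

Lemma exists_half_maximal_subset E s : 0 <= s ->
  exists C, half_maximal_subset E s C.
Proof.
move=> s_ge0.
pose S := [set m D | D in [set D | [/\ measurable D, D `<=` E & m D <= s]]].
have S_sup : has_sup S.
  split; last by exists s => _ [D [_ _ Ds] <-].
  by exists 0, set0; [split; rewrite ?fine_measure0 | rewrite fine_measure0].
have le_sup D : measurable D -> D `<=` E -> m D <= s -> m D <= sup S.
  by move=> mD DE Ds; apply: (ub_le_sup S_sup.2); exists D.
have [sup_le0|sup_gt0] := leP (sup S) 0.
  exists set0; split; rewrite ?fine_measure0 // => D mD DE Ds.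
  by rewrite mulr0; exact: le_trans (le_sup D mD DE Ds) sup_le0.
have half_sup_gt0 : 0 < sup S / 2 by rewrite divr_gt0.
have [_ [C [mC CE Cs] <-] supC] := sup_adherent half_sup_gt0 S_sup.
exists C; split => // D mD DE Ds; have := le_sup D mD DE Ds; lra.
Qed.

Definition subset_measures_attained (P : R -> Prop) :=
  forall A s, measurable A -> 0 <= s <= m A -> P s ->
    exists B, [/\ measurable B, B `<=` A & m B = s].

Lemma exists_greedy_exhaustion A t : measurable A -> 0 <= t ->
  exists G : nat -> set T,
    [/\ forall n, [/\ measurable (G n), G n `<=` A & m (G n) <= t],
        {homo G : n k / (n <= k)%N >-> n `<=` k} &
        forall n D, measurable D -> D `<=` A `\` G n -> m (G n) + m D <= t ->
          m D <= 2 * (m (G n.+1) - m (G n))].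
Proof.
move=> mA t_ge0.
pose admissible B := [/\ measurable B, B `<=` A & m B <= t].
have [grow growP] : {grow : set T -> set T & forall B, admissible B ->
    half_maximal_subset (A `\` B) (t - m B) (grow B)}.
  apply: (choice (P := fun B C => admissible B ->
    half_maximal_subset (A `\` B) (t - m B) C)) => B.
  have [[mB BA Bt]|nB] := pselect (admissible B); last by exists set0 => /nB.
  have budget_ge0 : 0 <= t - m B by rewrite subr_ge0.
  by have [C BC] := exists_half_maximal_subset (A `\` B) budget_ge0; exists C.
have grow_adm B : admissible B ->
    admissible (B `|` grow B) /\ m (B `|` grow B) = m B + m (grow B).
  move=> B_adm; case: (B_adm) => mB BA _; have [mC CAB Ct _] := growP B B_adm.
  have BC0 : B `&` grow B = set0 by apply/seteqP; split => // x [Bx /CAB[]].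
  have mBC := fine_measureU mB mC BC0.
  split=> //; split; [exact: measurableU | by move=> x [/BA|/CAB[]] | lra].
pose G n := iter n (fun B => B `|` grow B) set0.
have G_adm n : admissible (G n).
  elim: n => [|n IH]; last exact: (grow_adm _ IH).1.
  by split; rewrite /G /= ?fine_measure0.
exists G; split => //.
- apply: (@homo_leq _ G (fun X Y => X `<=` Y)) => [X //|Y X Z|n].
  + exact: subset_trans.
  + exact: subsetUl.
- move=> n D mD DAG DGt; have [_ _ _ Cmax] := growP _ (G_adm n).
  have -> : G n.+1 = G n `|` grow (G n) by [].
  by rewrite (grow_adm _ (G_adm n)).2 addrC addKr; apply: Cmax => //; lra.
Qed.

Section nonatomic.
Hypothesis nu_nonatomic : nonatomic nu.

Lemma nonatomic_halve A : measurable A -> 0 < m A ->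
  exists B, [/\ measurable B, B `<=` A, 0 < m B & 2 * m B <= m A].
Proof.
move=> mA A_gt0.
have nuA_gt0 : (0 < nu A)%E by rewrite measure_fineE // lte_fin.
have [B [mB BA /andP[B_gt0 BA_lt]]] := nu_nonatomic mA nuA_gt0.
rewrite (measure_fineE mB) lte_fin in B_gt0.
rewrite (measure_fineE mA) (measure_fineE mB) lte_fin in BA_lt.
have [B_half|B_big] := leP (2 * m B) (m A); first by exists B.
exists (A `\` B); split; [exact: measurableD | by move=> x [] | |];
  rewrite fine_measureD //; lra.
Qed.

Lemma nonatomic_small_subset A e : measurable A -> 0 < m A ->
  0 < e -> exists B, [/\ measurable B, B `<=` A, 0 < m B & m B < e].
Proof.
move=> mA A_gt0 e_gt0.
have shrink n : exists B,
    [/\ measurable B, B `<=` A, 0 < m B & n.+1%:R * m B <= m A].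
  elim: n => [|n [B [mB BA B_gt0 nB]]].
    by exists A; split; rewrite ?mul1r.
  have [C [mC CB C_gt0 C_half]] := nonatomic_halve mB B_gt0.
  exists C; split => //; first exact: subset_trans CB BA.
  have nC : n%:R * (2 * m C) <= n%:R * m B by rewrite ler_wpM2l.
  have nC_ge0 : 0 <= n%:R * m C by apply/mulr_ge0/ltW.
  rewrite -!natr1 in nB *; lra.
have [B [mB BA B_gt0 NB]] := shrink (Num.truncn (m A / e)).
exists B; split => //.
have := truncnS_gt (m A / e); rewrite ltr_pdivrMr //.
set N := _.+1%:R in NB *; have N_gt0 : 0 < N by rewrite ltr0n.
by move=> ANe; rewrite -(ltr_pM2l N_gt0); exact: le_lt_trans NB ANe.
Qed.

Lemma nonatomic_subset_measures_attained :
  subset_measures_attained (fun=> True).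
Proof.
move=> A t mA /andP[t_ge0 tA] _.
have [G [G_adm G_incr G_gain]] := exists_greedy_exhaustion mA t_ge0.
pose Ginf := \bigcup_n G n.
have mGinf : measurable Ginf by apply: bigcupT_measurable => n; case: (G_adm n).
have GinfA : Ginf `<=` A by move=> x [n _]; case: (G_adm n) => _ GA _ /GA.
have Ginf_le : m Ginf <= t.
  by apply: fine_measure_bigcup_le => [n|n k /G_incr|n] //; case: (G_adm n).
exists Ginf; split => //; apply/eqP; rewrite eq_le Ginf_le leNgt /=.
apply/negP => Ginf_lt.
(* A set D of small positive measure left out by every G n forces each greedy
   step to gain at least m D / 2, so the m (G n) would be unbounded. *)
have AGinf_gt0 : 0 < m (A `\` Ginf) by rewrite fine_measureD //; lra.
have gap_gt0 : 0 < t - m Ginf by rewrite subr_gt0.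
have [D [mD DA D_gt0 D_lt]] :=
  nonatomic_small_subset (measurableD mA mGinf) AGinf_gt0 gap_gt0.
have G_lin n : n%:R * m D <= 2 * (m (G n) - m (G 0%N)).
  elim: n => [|n IH]; first by rewrite mul0r subrr mulr0.
  have DAG : D `<=` A `\` G n.
    by move=> x /DA[Ax nGx]; split => // Gx; apply: nGx; exists n.
  have GGinf : m (G n) <= m Ginf.
    by apply: le_fine_measure => //; [case: (G_adm n) | exact: bigcup_sup].
  have := G_gain n D mD DAG; rewrite -natr1; lra.
have [_ _ GNt] := G_adm (Num.truncn (2 * t / m D)).+1.
have := G_lin (Num.truncn (2 * t / m D)).+1.
have := truncnS_gt (2 * t / m D); rewrite ltr_pdivrMr //.
have := fine_measure_ge0 (G 0%N); lra.
Qed.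

End nonatomic.


Section sorted_partition.
Variables (P : R -> Prop) (f : T -> R).
Hypotheses (P_subr : forall t A, P t -> P (t - m A))
  (P_attained : subset_measures_attained P) (mf : measurable_fun setT f).

Lemma measurable_sublevel A c : measurable A ->
  measurable (A `&` [set x | f x <= c]).
Proof.
move=> mA; have mfA : measurable_fun A f by exact: measurable_funS mf.
(* the sublevel set is the preimage of [true] under the boolean test *)
exact: (measurable_fun_ler mfA (measurable_cst c) mA (Y := [set true])).
Qed.

Lemma measurable_strict_sublevel A c : measurable A ->
  measurable (A `&` [set x | f x < c]).
Proof.
move=> mA; have mfA : measurable_fun A f by exact: measurable_funS mf.
exact: (measurable_fun_ltr mfA (measurable_cst c) mA (Y := [set true])).
Qed.

Lemma subset_sublevel A c c' : c <= c' ->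
  A `&` [set x | f x <= c] `<=` A `&` [set x | f x <= c'].
Proof. by move=> cc' x [Ax fx]; split => //; exact: le_trans fx cc'. Qed.

Lemma le_fine_measure_sublevel A c c' : measurable A -> c <= c' ->
  m (A `&` [set x | f x <= c]) <= m (A `&` [set x | f x <= c']).
Proof.
move=> mA cc'; apply: le_fine_measure; last exact: subset_sublevel.
  exact: measurable_sublevel.
exact: measurable_sublevel.
Qed.

Lemma exists_sublevel_ge A t : measurable A -> t < m A ->
  exists c, t <= m (A `&` [set x | f x <= c]).
Proof.
move=> mA tA; apply: contrapT => /forallNP small; move: tA; apply/negP.
rewrite -leNgt; have -> : A = \bigcup_n (A `&` [set x | f x <= n%:R]).
  apply/seteqP; split => [x Ax|x [n _ []] //].
  by exists (Num.truncn (f x)).+1 => //; split => //; exact/ltW/truncnS_gt.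
apply: fine_measure_bigcup_le => [n|n k nk|n].
- exact: measurable_sublevel.
- by apply: subset_sublevel; rewrite ler_nat.
- by rewrite leNgt; apply/negP => /ltW /small.
Qed.

Lemma exists_sublevel_lt A t : measurable A -> 0 < t ->
  exists c, m (A `&` [set x | f x <= c]) < t.
Proof.
move=> mA t_gt0; apply: contrapT => /forallNP large; move: t_gt0; apply/negP.
rewrite -leNgt -fine_measure0.
have <- : \bigcap_n (A `&` [set x | f x <= - n%:R]) = set0.
  apply/seteqP; split => // x Ix; have [_ /=] := Ix (Num.truncn (- f x)).+1 I.
  have := truncnS_gt (- f x); lra.
apply: fine_measure_bigcap_ge => [n|n k nk|n].
- exact: measurable_sublevel.
- by apply: subset_sublevel; rewrite lerN2 ler_nat.
- by rewrite leNgt; apply/negP => /large.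
Qed.

Lemma fine_measure_sublevel_ge A t c0 : measurable A ->
  (forall c, c0 < c -> t <= m (A `&` [set x | f x <= c])) ->
  t <= m (A `&` [set x | f x <= c0]).
Proof.
move=> mA ge_t.
have -> : A `&` [set x | f x <= c0] =
    \bigcap_n (A `&` [set x | f x <= c0 + n.+1%:R^-1]).
  apply/seteqP; split => [x [Ax fx] n _|x Ix].
    by split => //=; apply: le_trans fx _; rewrite lerDl invr_ge0.
  split; first by have [] := Ix 0%N I.
  rewrite /= leNgt; apply/negP => /ltr_add_invr[n].
  by have [_ /= fx_le] := Ix n I; rewrite ltNge fx_le.
apply: fine_measure_bigcap_ge => [n|n k nk|n].
- exact: measurable_sublevel.
- by apply: subset_sublevel; rewrite lerD2l lef_pV2 ?posrE ?ltr0n // ler_nat.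
- by apply: ge_t; rewrite ltrDl invr_gt0 ltr0n.
Qed.

Lemma fine_measure_strict_sublevel_le A t c0 : measurable A ->
  (forall c, c < c0 -> m (A `&` [set x | f x <= c]) <= t) ->
  m (A `&` [set x | f x < c0]) <= t.
Proof.
move=> mA le_t.
have -> : A `&` [set x | f x < c0] =
    \bigcup_n (A `&` [set x | f x <= c0 - n.+1%:R^-1]).
  apply/seteqP; split => [x [Ax /ltr_add_invr[n fx]]|x [n _ [Ax /= fx]]].
    by exists n => //; split => //=; rewrite lerBrDr ltW.
  split => //=; apply: le_lt_trans fx _.
  by rewrite gtrBl invr_gt0 ltr0n.
apply: fine_measure_bigcup_le => [n|n k nk|n].
- exact: measurable_sublevel.
- apply: subset_sublevel.
  by rewrite lerD2l lerN2 lef_pV2 ?posrE ?ltr0n // ler_nat.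
- by apply: le_t; rewrite gtrBl invr_gt0 ltr0n.
Qed.

Lemma sublevel_quantile A t : measurable A -> 0 < t < m A ->
  exists c, m (A `&` [set x | f x < c]) <= t <= m (A `&` [set x | f x <= c]).
Proof.
move=> mA /andP[t_gt0 tA].
pose S := [set c | t <= m (A `&` [set x | f x <= c])].
have S_inf : has_inf S.
  split; first by have [c] := exists_sublevel_ge mA tA; exists c.
  have [c0 c0_lt] := exists_sublevel_lt mA t_gt0; exists c0 => c Sc.
  rewrite leNgt; apply/negP => c_lt; move: Sc; rewrite /S /= leNgt => /negP.
  by apply; exact: le_lt_trans (le_fine_measure_sublevel mA (ltW c_lt)) c0_lt.
exists (inf S); apply/andP; split.
- apply: fine_measure_strict_sublevel_le => // c c_lt.
  rewrite leNgt; apply/negP => /ltW Sc.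
  by have := ge_inf S_inf.2 Sc; rewrite leNgt c_lt.
- apply: fine_measure_sublevel_ge => // c c_gt.
  have gap_gt0 : 0 < c - inf S by rewrite subr_gt0.
  have [c' Sc' c'_lt] := inf_adherent gap_gt0 S_inf.
  rewrite addrC subrK in c'_lt.
  exact: le_trans Sc' (le_fine_measure_sublevel mA (ltW c'_lt)).
Qed.

Lemma exists_lower_subset A t : measurable A -> 0 <= t <= m A -> P t ->
  exists B, [/\ measurable B, B `<=` A, m B = t &
    forall x y, B x -> (A `\` B) y -> f x <= f y].
Proof.
move=> mA /andP[t_ge0 tA] Pt.
have [t_le0|t_gt0] := leP t 0.
  exists set0; split => //.
  by rewrite fine_measure0; apply/eqP; rewrite eq_le t_le0 t_ge0.
have [At|tA'] := leP (m A) t.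
  by exists A; split => //; [apply/eqP; rewrite eq_le tA At | move=> x y _ []].
have t_in : 0 < t < m A by rewrite t_gt0 tA'.
have [c /andP[lt_t t_le]] := sublevel_quantile mA t_in.
set L := A `&` [set x | f x < c]; set E := A `&` [set x | f x <= c] `\` L.
have mL : measurable L by exact: measurable_strict_sublevel.
have LE : L `<=` A `&` [set x | f x <= c] by move=> x [Ax /ltW].
have mE : measurable E by apply: measurableD => //; exact: measurable_sublevel.
have mEE : m E = m (A `&` [set x | f x <= c]) - m L.
  by rewrite fine_measureD //; exact: measurable_sublevel.
have [|C [mC CE mCt]] := P_attained mE _ (P_subr L Pt).
  by rewrite mEE subr_ge0 lt_t lerB.
exists (L `|` C); split.
- exact: measurableU.
- by move=> x [[]|/CE[[]]].
- have LC0 : L `&` C = set0 by apply/seteqP; split => // x [Lx /CE[]].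
  by rewrite fine_measureU // mCt addrC subrK.
- move=> x y Lx [Ay nLCy].
  have fx_le : f x <= c by case: Lx => [[_ /ltW]|/CE[[]]].
  have fy_ge : c <= f y.
    by rewrite leNgt; apply/negP => fy_lt; apply: nLCy; left.
  exact: le_trans fx_le fy_ge.
Qed.

Lemma exists_sorted_partition k (q : nat -> R) A : measurable A ->
  (forall i, (i <= k)%N -> 0 <= q i /\ P (q i)) ->
  m A = \sum_(i < k.+1) q i ->
  exists B : nat -> set T, [/\ forall i, measurable (B i) /\ B i `<=` A,
    forall i j, i != j -> B i `&` B j = set0,
    forall x, A x -> exists2 i, (i <= k)%N & B i x,
    forall i, (i <= k)%N -> m (B i) = q i &
    forall i j, (i < j)%N -> forall x y, B i x -> B j y -> f x <= f y].
Proof.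
elim: k q A => [|k IH] q A mA q_ok sum_q.
  exists (fun i => if i is 0 then A else set0); split.
  - by case=> [|i]; split.
  - by case=> [|i] [|j] //= _; rewrite ?setI0 ?set0I.
  - by move=> x Ax; exists 0%N.
  - by case=> // _; rewrite sum_q big_ord1.
  - by case=> [|i] [|j].
have [q0_ge0 Pq0] := q_ok 0%N isT.
rewrite big_ord_recl in sum_q.
have rest_ge0 : 0 <= \sum_(i < k.+1) q (lift ord0 i).
  by apply: sumr_ge0 => i _; have [] := q_ok (lift ord0 i) (ltn_ord _).
have [B0 [mB0 B0A mB0q B0_low]] : exists B0, [/\ measurable B0, B0 `<=` A,
    m B0 = q 0%N & forall x y, B0 x -> (A `\` B0) y -> f x <= f y].
  by apply: exists_lower_subset => //; rewrite q0_ge0 sum_q lerDl.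
have [|B [B_sub B_disj B_cover mBq B_sorted]] :=
    IH (fun i => q i.+1) (A `\` B0) (measurableD mA mB0) (fun i => q_ok i.+1).
  by rewrite fine_measureD // sum_q mB0q addrC addKr.
exists (fun i => if i is i'.+1 then B i' else B0); split.
- case=> [|i]; first by split.
  by have [mBi BiA] := B_sub i; split => // x /BiA[].
- case=> [|i] [|j] //= ij; last exact: B_disj.
  + by apply/seteqP; split => // x [B0x /(B_sub j).2[]].
  + by apply/seteqP; split => // x [/(B_sub i).2[]].
- move=> x Ax; have [B0x|nB0x] := pselect (B0 x); first by exists 0%N.
  by have [i ik Bix] := B_cover x (conj Ax nB0x); exists i.+1.
- by case=> [|i] //= ik; apply: mBq.
- case=> [|i] [|j] //= ij x y; last exact: B_sorted.
  by move=> B0x /(B_sub j).2; exact: B0_low.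
Qed.

End sorted_partition.

Section counting.
Hypotheses (T_finite : finite_set [set: T])
  (nu_counting : forall A, nu A = counting A).

Lemma counting_fine_measure_nat A : m A \is a Num.nat.
Proof.
have fA : finite_set A by exact: sub_finite_set T_finite.
by rewrite nu_counting /counting asboolT //= natr_nat.
Qed.

Lemma counting_fine_measure1 a : m [set a] = 1.
Proof.
rewrite nu_counting /counting asboolT ?finite_set1 //=.
by rewrite fset_set1 finmap.cardfs1.
Qed.

Lemma counting_subset_measures_attained : (forall A : set T, measurable A) ->
  subset_measures_attained (fun s => s \is a Num.int).
Proof.
move=> all_measurable A s _ /andP[s_ge0 sA].
rewrite intrEge0 // => /natrP[n sn].
rewrite {s s_ge0}sn in sA *; elim: n sA => [|n IH] nA.
  by exists set0; split => //; rewrite fine_measure0.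
have [|C [_ CA mCn]] := IH; first by apply: le_trans nA; rewrite ler_nat.
have /set0P[a [Aa nCa]] : A `\` C != set0.
  apply/eqP => AC0.
  have := fine_measureD (all_measurable A) (all_measurable C) CA.
  by rewrite AC0 fine_measure0 mCn -natr1 in nA *; lra.
exists (C `|` [set a]); split => //; first by move=> x [/CA|->].
have Ca0 : C `&` [set a] = set0.
  by apply/seteqP; split => // x [Cx xa]; apply: nCa; rewrite -xa.
by rewrite fine_measureU // mCn counting_fine_measure1 natr1.
Qed.

End counting.

End fine_finite_measure.

Lemma ereal_sup_le_inf_image (R : realType) (T : Type) (f : T -> R)
    (A B : set T) :
  (forall a b, A a -> B b -> f a <= f b) ->
  (ereal_sup [set (f x)%:E | x in A] <= ereal_inf [set (f x)%:E | x in B])%E.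
Proof.
move=> AB; apply: le_ereal_inf_tmp => _ [b Bb <-].
by apply: ge_ereal_sup => _ [a Aa <-]; rewrite lee_fin; exact: AB.
Qed.

Theorem proposition1 (R : realType) (d : measure_display) (T : measurableType d)
  (k : nat) (mu nu : {finite_measure set T -> \bar R}) (f : T -> R)
  (q : 'I_k -> R) :
  (0 < k)%N ->
  mu `<< nu ->
  is_RN_derivative mu nu f ->
  ( (* case (I): G = R and nu non-atomic *)
    nonatomic nu
    \/
    (* case (II): G = Z, X finite, Sigma = 2^X, nu the counting measure *)
    [/\ finite_set (@setT T), (forall A : set T, measurable A),
        (forall A : set T, nu A = counting A) &
        (forall i, q i \is a Num.int)] ) ->
  (forall i, 0 <= q i) ->
  ((\sum_(i < k) q i)%:E = nu setT)%E ->
  exists B : 'I_k -> set T,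
    in_Pnuq nu q B /\
    (forall i j : 'I_k, (i < j)%N ->
       (ereal_sup [set (f x)%:E | x in B i] <=
        ereal_inf [set (f x)%:E | x in B j])%E).
Proof.
move=> k_gt0 _ [mf _ _] nu_cases q_ge0 sum_q.
(* P is the set G of admissible values: the reals in case (I), the integers
   in case (II). *)
have {nu_cases}[P [P_subr P_attained Pq]] : exists P : R -> Prop,
    [/\ forall t A, P t -> P (t - fine (nu A)),
        subset_measures_attained nu P & forall i, P (q i)].
  case: nu_cases => [na|[T_finite all_measurable nu_counting q_int]].
    exists (fun=> True); split => //.
    exact: nonatomic_subset_measures_attained.
  exists (fun s => s \is a Num.int); split => //.
    move=> t A t_int; rewrite rpredB //.
    have := counting_fine_measure_nat T_finite nu_counting A.
    by rewrite natrEint => /andP[].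
  exact: counting_subset_measures_attained.
case: k k_gt0 q q_ge0 sum_q Pq => // k _ q q_ge0 sum_q Pq.
have [|B [B_sub B_disj B_cover mBq B_sorted]] :=
  exists_sorted_partition P_subr P_attained mf (k := k)
    (q := fun i => q (inord i)) measurableT
    (fun i _ => conj (q_ge0 (inord i)) (Pq (inord i))).
  by rewrite -sum_q /=; apply: eq_bigr => i _; rewrite inord_val.
exists (fun i => B i); split; first split.
- by move=> i; case: (B_sub i).
- by move=> i j ij; apply: B_disj.
- apply/seteqP; split => // x _; have [i ik Bix] := B_cover x I.
  by exists (Ordinal (ik : (i < k.+1)%N)).
- move=> i; have [mBi _] := B_sub i.
  by rewrite measure_fineE // (mBq _ (ltn_ord i)) inord_val.
- by move=> i j ij; apply: ereal_sup_le_inf_image => x y; exact: B_sorted.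
Qed.
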